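(* Let $\tilde{I} \approx Q_1$ via $\mathbf{S}_1$ and $\tilde{I} \approx Q_2$ via $\mathbf{S}_2$. If $Q_3 = Q_1 \circ Q_2$ via $\mathbf{B}$, then $\tilde{I} \approx Q_3$ via $\mathbf{S}_3$, where $\mathbf{S}_3$ satisfies the matrix equation \[ \mathbf{S}_3 \mathbf{B} = \mathbf{B}_0 ( \mathbf{S}_1 \otimes \mathbf{S}_2 ), \] where \[ \mathbf{B}_0 = \left[ \begin{array}{cccc} 1 & 0 & 0 & D- \lambda^2 \\ 0 & 1 & 1 & 2 \lambda \end{array} \right] \] and $\lambda = [ \sqrt D ]$.
   Context: All forms are properly primitive indefinite integral binary quadratic forms of determinant $D = b^2 - ac > 0$ (not a square), where a form $Q=[a,2b,c]$ is $Q(x_1,x_2) = ax_1^2+2bx_1x_2+cx_2^2 = \mathbf{x}^t \mathbf{Q}\mathbf{x}$ with symmetric matrix $\mathbf{Q} = \left[\begin{array}{cc} a & b\\ b & c\end{array}\right]$. Two forms satisfy $Q_1 \approx Q_2$ via an integer $2\times 2$ matrix $\mathbf{S}$ with $\det \mathbf{S}=1$ if $\mathbf{S}^t \mathbf{Q}_1 \mathbf{S} = \mathbf{Q}_2$. The identity form is $I=[1,0,-D]$, and the reduced identity form $\tilde{I} = [1, 2\lambda, \mu]$ is defined by $I \approx \tilde{I}$ via $\left[\begin{array}{cc} 1 & \lambda \\ 0 & 1\end{array}\right]$ with $\lambda = [\sqrt D]$. A form $Q_3$ is composed of $Q_1$ and $Q_2$ via a $2\times 4$ bilinear matrix $\mathbf{B}$,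 written $Q_3 = Q_1 \circ Q_2$, if $\mathbf{x}^t \mathbf{Q}_1 \mathbf{x}\, \mathbf{y}^t \mathbf{Q}_2 \mathbf{y} = \mathbf{z}^t \mathbf{B}^t \mathbf{Q}_3 \mathbf{B} \mathbf{z}$ identically, where $\mathbf{x}^t=[x_1,x_2]$, $\mathbf{y}^t=[y_1,y_2]$, $\mathbf{z}^t = [x_1y_1, x_1y_2, x_2y_1, x_2y_2]$, and $\mathbf{B}=[b_{ij}]$ is unimodular (its six $2\times 2$ minors $\Delta_{ij}$ formed from columns $i<j$ have gcd 1) and oriented ($a_1\Delta_{12}>0$, $a_2\Delta_{13}>0$ where $a_1,a_2$ are the first coefficients of $Q_1,Q_2$). $\mathbf{S}_1 \otimes \mathbf{S}_2$ denotes the Kronecker product. *)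

From HB Require Import structures.
From mathcomp Require Import all_boot all_order all_algebra.
From Stdlib Require Import PeanoNat.
Set Implicit Arguments. Unset Strict Implicit. Unset Printing Implicit Defensive.
Import Order.TTheory GRing.Theory Num.Theory.
Local Open Scope ring_scope.

Definition mx22 (a b c d : int) : 'M[int]_2 :=
  \matrix_(i < 2, j < 2)
    if (i : nat) == 0%N then (if (j : nat) == 0%N then a else b)
    else (if (j : nat) == 0%N then c else d).

(* symmetric matrix of the form Q = [a, 2b, c] *)
Definition formmx (a b c : int) : 'M[int]_2 := mx22 a b b c.

Definition fdet (Q : 'M[int]_2) : int := Q 0 1 ^+ 2 - Q 0 0 * Q 1 1.

Definition pp_form (D : int) (Q : 'M[int]_2) : Prop :=
  Q^T = Q /\ fdet Q = D /\ gcdz (gcdz (Q 0 0) (2 * Q 0 1)) (Q 1 1) = 1.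

Definition equiv_via (Q1 Q2 S : 'M[int]_2) : Prop :=
  \det S = 1 /\ S^T *m Q1 *m S = Q2.

Definition lam (D : int) : int := (Nat.sqrt `|D|%N)%:Z.

Definition Iform (D : int) : 'M[int]_2 := formmx 1 0 (- D).

Definition Itilde (D : int) : 'M[int]_2 :=
  (mx22 1 (lam D) 0 1)^T *m Iform D *m mx22 1 (lam D) 0 1.

Definition kron (m1 n1 m2 n2 : nat)
  (A : 'M[int]_(m1.+1, n1.+1)) (B : 'M[int]_(m2.+1, n2.+1))
  : 'M[int]_(m1.+1 * m2.+1, n1.+1 * n2.+1) :=
  \matrix_(i, j) (A (inord (i %/ m2.+1)) (inord (j %/ n2.+1)) *
                  B (inord (i %% m2.+1)) (inord (j %% n2.+1))).

Definition minor24 (B : 'M[int]_(2, 4)) (i j : 'I_4) : int :=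
  B 0 i * B 1 j - B 0 j * B 1 i.

Definition c0 : 'I_4 := inord 0.
Definition c1 : 'I_4 := inord 1.
Definition c2 : 'I_4 := inord 2.
Definition c3 : 'I_4 := inord 3.

Definition unimodular24 (B : 'M[int]_(2, 4)) : Prop :=
  gcdz (gcdz (gcdz (minor24 B c0 c1) (minor24 B c0 c2))
             (gcdz (minor24 B c0 c3) (minor24 B c1 c2)))
       (gcdz (minor24 B c1 c3) (minor24 B c2 c3)) = 1.

Definition composed (Q1 Q2 Q3 : 'M[int]_2) (B : 'M[int]_(2, 4)) : Prop :=
  [/\ forall x y : 'cV[int]_2,
        (x^T *m Q1 *m x) 0 0 * (y^T *m Q2 *m y) 0 0 =
        ((kron x y)^T *m B^T *m Q3 *m B *m kron x y) 0 0,
      unimodular24 B,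
      0 < Q1 0 0 * minor24 B c0 c1 &
      0 < Q2 0 0 * minor24 B c0 c2].

Definition B0 (D : int) : 'M[int]_(2, 4) :=
  \matrix_(i < 2, j < 4)
    nth 0 (nth [::] [:: [:: 1; 0; 0; D - lam D ^+ 2]; [:: 0; 1; 1; 2 * lam D]] i) j.

(* Put B' := B0 (S1 ⊗ S2).  Since Ĩ(x) Ĩ(y) = Ĩ(B0 (x ⊗ y)), the matrix B'
   composes Q1 = S1^T Ĩ S1 and Q2 = S2^T Ĩ S2 into Ĩ, with the same orientation
   as B.  The 2x2 minors of an oriented composition matrix depend only on the
   composed forms: fixing one factor, B (x ⊗ y) becomes a linear substitution
   carrying Q3 to a multiple of the other factor, and comparing discriminants
   shows that its determinant, a quadratic form whose coefficients are minors
   of B, is that multiple up to a sign, which the orientation fixes.  So B and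
   B' have the same minors (a1, a2, b1 + b2, b2 - b1, c2, c1).  As the minors
   of B generate the unit ideal, Cramer's rule turns this into a matrix S3 with
   S3 B = B'; comparing one minor gives det S3 = 1, and Q3 = S3^T Ĩ S3 because
   both forms take the same values on the columns of B, which are linearly
   independent. *)

From mathcomp Require Import all_boot all_order all_algebra.
From mathcomp Require Import mxtens ring lra.
Import Order.TTheory GRing.Theory Num.Theory.
Set Implicit Arguments. Unset Strict Implicit. Unset Printing Implicit Defensive.
Local Open Scope ring_scope.

Section Minors.
Variable R : comPzRingType.

Lemma sum_ord2 (F : 'I_2 -> R) : \sum_(k < 2) F k = F 0 + F 1.
Proof. by rewrite !big_ord_recl big_ord0 addr0; congr (F _ + F _); apply: val_inj. Qed.

Lemma ord2P (r : 'I_2) : r = 0 \/ r = 1.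
Proof. by case: r => [[|[|//]] ?]; [left | right]; apply: val_inj. Qed.

Lemma sum_ord4 (F : 'I_4 -> R) : \sum_(k < 4) F k = F c0 + F c1 + F c2 + F c3.
Proof.
rewrite !big_ord_recl big_ord0 addr0 !addrA.
by congr (F _ + F _ + F _ + F _); apply: val_inj; rewrite /= inordK.
Qed.

Lemma ord4P (k : 'I_4) : [\/ k = c0, k = c1, k = c2 | k = c3].
Proof.
by case: k => [[|[|[|[|//]]]] ?]; [constructor 1|constructor 2|constructor 3|constructor 4];
  apply: val_inj; rewrite /= inordK.
Qed.

Lemma det_mx2 (A : 'M[R]_2) : \det A = A 0 0 * A 1 1 - A 0 1 * A 1 0.
Proof.
rewrite (expand_det_row _ 0) sum_ord2 /cofactor !det_mx11 !mxE /=.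
rewrite expr0 expr1 mul1r mulN1r mulrN.
by congr (_ * A _ _ - _ * A _ _); apply: val_inj.
Qed.

(* Generic form of [minor24]; the two are convertible on [int]. *)
Definition minor2 n (B : 'M[R]_(2, n)) (i j : 'I_n) : R :=
  B 0 i * B 1 j - B 0 j * B 1 i.

Lemma tr_conjmx m n (S : 'M[R]_(m, n)) (A : 'M[R]_m) :
  A^T = A -> (S^T *m A *m S)^T = S^T *m A *m S.
Proof. by move=> sA; rewrite 2!trmx_mul trmxK sA mulmxA. Qed.

Lemma minor2C n (B : 'M[R]_(2, n)) i j : minor2 B j i = - minor2 B i j.
Proof. by rewrite /minor2 opprB [B 0 j * _]mulrC [B 0 i * _]mulrC. Qed.

Lemma minor2_mulmx n (S : 'M[R]_2) (B : 'M[R]_(2, n)) i j :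
  minor2 (S *m B) i j = \det S * minor2 B i j.
Proof. by rewrite /minor2 det_mx2 !mxE !sum_ord2; ring. Qed.

Definition left_multiple n (B C : 'M[R]_(2, n)) := exists S : 'M[R]_2, S *m B = C.

Lemma left_multipleD n (B C1 C2 : 'M[R]_(2, n)) :
  left_multiple B C1 -> left_multiple B C2 -> left_multiple B (C1 + C2).
Proof. by move=> [S1 <-] [S2 <-]; exists (S1 + S2); rewrite mulmxDl. Qed.

Lemma left_multipleZ n (B C : 'M[R]_(2, n)) a :
  left_multiple B C -> left_multiple B (a *: C).
Proof. by move=> [S <-]; exists (a *: S); rewrite scalemxAl. Qed.

(* The witness is [[B'_i B'_j] * adj [B_i B_j]]: by Cramer's rule the adjugate
   maps column [k] of [B] to [(minor k j, minor i k)], the same minors as for [B']. *)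
Lemma minor_left_multiple n (B B' : 'M[R]_(2, n)) i j :
  (forall k l, minor2 B k l = minor2 B' k l) -> left_multiple B (minor2 B i j *: B').
Proof.
move=> eqB; exists (\matrix_(r < 2, s < 2)
  if (s : nat) == 0%N then B' r i * B 1 j - B' r j * B 1 i
  else B' r j * B 0 i - B' r i * B 0 j).
apply/matrixP => r k; rewrite !mxE sum_ord2 !mxE /=.
transitivity (B' r i * minor2 B k j + B' r j * minor2 B i k); first by rewrite /minor2; ring.
by rewrite !eqB /minor2; case: (ord2P r) => ->; ring.
Qed.

Lemma eq_minor2_4 (B B' : 'M[R]_(2, 4)) :
  minor2 B c0 c1 = minor2 B' c0 c1 -> minor2 B c0 c2 = minor2 B' c0 c2 ->
  minor2 B c0 c3 = minor2 B' c0 c3 -> minor2 B c1 c2 = minor2 B' c1 c2 ->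
  minor2 B c1 c3 = minor2 B' c1 c3 -> minor2 B c2 c3 = minor2 B' c2 c3 ->
  forall i j, minor2 B i j = minor2 B' i j.
Proof.
move=> e01 e02 e03 e12 e13 e23 i j.
case: (ord4P i) => ->; case: (ord4P j) => -> //; try by rewrite /minor2 !subrr.
all: by rewrite minor2C [RHS]minor2C; congruence.
Qed.

End Minors.

Section BinaryForms.
Variable R : realDomainType.

Definition qform (a b c u v : R) := a * u ^+ 2 + 2 * b * u * v + c * v ^+ 2.

Lemma qform_eq_of_values (a b c a' b' c' x0 y0 x1 y1 : R) :
  x0 * y1 - x1 * y0 != 0 ->
  qform a b c x0 y0 = qform a' b' c' x0 y0 ->
  qform a b c x1 y1 = qform a' b' c' x1 y1 ->
  qform a b c (x0 + x1) (y0 + y1) = qform a' b' c' (x0 + x1) (y0 + y1) ->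
  [/\ a = a', b = b' & c = c'].
Proof.
move=> det_neq0 e0 e1 e01.
set d := x0 * y1 - x1 * y0.
set q0 := qform a b c x0 y0 - qform a' b' c' x0 y0.
set q1 := qform a b c x1 y1 - qform a' b' c' x1 y1.
set q01 := qform a b c (x0 + x1) (y0 + y1) - qform a' b' c' (x0 + x1) (y0 + y1).
have q_eq0 : [/\ q0 = 0, q1 = 0 & q01 = 0] by rewrite /q0 /q1 /q01 e0 e1 e01 !subrr.
have d2_neq0 : 2 * d ^+ 2 != 0 by rewrite mulf_neq0 ?pnatr_eq0 ?expf_neq0.
have Ea : (a - a') * (2 * d ^+ 2) =
    2 * y1 ^+ 2 * q0 - 2 * y0 * y1 * (q01 - q0 - q1) + 2 * y0 ^+ 2 * q1.
  by rewrite /d /q0 /q1 /q01 /qform; ring.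
have Eb : (b - b') * (2 * d ^+ 2) =
    - 2 * x1 * y1 * q0 + (x0 * y1 + x1 * y0) * (q01 - q0 - q1) - 2 * x0 * y0 * q1.
  by rewrite /d /q0 /q1 /q01 /qform; ring.
have Ec : (c - c') * (2 * d ^+ 2) =
    2 * x1 ^+ 2 * q0 - 2 * x0 * x1 * (q01 - q0 - q1) + 2 * x0 ^+ 2 * q1.
  by rewrite /d /q0 /q1 /q01 /qform; ring.
have eq_of_diff x x' : (x - x') * (2 * d ^+ 2) = 0 -> x = x'.
  by move/eqP; rewrite mulf_eq0 (negbTE d2_neq0) orbF subr_eq0 => /eqP.
case: q_eq0 Ea Eb Ec => -> -> ->; rewrite !(subrr, mulr0, addr0, mul0r).
by move=> /eq_of_diff-> /eq_of_diff-> /eq_of_diff->.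
Qed.

Lemma sqr_det_transform (D a b c a' b' c' k p q r s : R) :
  D != 0 -> b ^+ 2 - a * c = D -> b' ^+ 2 - a' * c' = D ->
  (forall u1 u2, k * qform a b c u1 u2 = qform a' b' c' (p * u1 + q * u2) (r * u1 + s * u2)) ->
  (p * s - q * r) ^+ 2 = k ^+ 2.
Proof.
move=> D_neq0 dQ dQ' H.
have e10 : qform a' b' c' p r = k * a.
  by have := H 1 0; rewrite !(mulr1, mulr0, addr0) => <-; rewrite /qform; ring.
have e01 : qform a' b' c' q s = k * c.
  by have := H 0 1; rewrite !(mulr1, mulr0, add0r) => <-; rewrite /qform; ring.
have e11 : qform a' b' c' (p + q) (r + s) = k * (a + 2 * b + c).
  by have := H 1 1; rewrite !mulr1 => <-; rewrite /qform; ring.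
have gram : -4 * (b' ^+ 2 - a' * c') * (p * s - q * r) ^+ 2 =
    4 * qform a' b' c' p r * qform a' b' c' q s -
    (qform a' b' c' (p + q) (r + s) - qform a' b' c' p r - qform a' b' c' q s) ^+ 2.
  by rewrite /qform; ring.
apply: (mulfI (_ : -4 * D != 0)); first by rewrite mulf_neq0 // oppr_eq0 pnatr_eq0.
by rewrite -{1}dQ' gram e10 e01 e11 -dQ; ring.
Qed.

Lemma eq_quadratic_of_sqr (a b c a' b' c' : R) :
  (forall v1 v2, (a * v1 ^+ 2 + b * v1 * v2 + c * v2 ^+ 2) ^+ 2 =
                 (a' * v1 ^+ 2 + b' * v1 * v2 + c' * v2 ^+ 2) ^+ 2) ->
  0 < a * a' -> [/\ a = a', b = b' & c = c'].
Proof.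
move=> H aa'_gt0.
have a_eq : a = a'.
  have /eqP := H 1 0; rewrite !(expr1n, mulr1, mulr0, expr0n, addr0) eqf_sqr.
  case/orP=> /eqP // a_opp; move: aa'_gt0; rewrite a_opp mulNr oppr_gt0.
  by rewrite ltNge -expr2 sqr_ge0.
have a'_neq0 : a' != 0 by apply: contraTneq aa'_gt0 => a'0; rewrite a'0 mulr0 ltxx.
subst a; pose h t := (a' * t ^+ 2 + b * t + c) ^+ 2 - (a' * t ^+ 2 + b' * t + c') ^+ 2.
have h0 t : h t = 0 by have := H t 1; rewrite !(expr1n, mulr1) /h => ->; rewrite subrr.
have eq_of_diff n x x' : (n%:R * a') * (x - x') = 0 -> n != 0%N -> x = x'.
  move/eqP; rewrite !mulf_eq0 pnatr_eq0 (negbTE a'_neq0) orbF subr_eq0.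
  by case/orP=> [/eqP-> //|/eqP].
have b_eq : b = b'.
  apply: (eq_of_diff 12%N) => //.
  have -> : 12%:R * a' * (b - b') = h 2 - 3 * h 1 - h (-1) + 3 * h 0 by rewrite /h; ring.
  by rewrite !h0; ring.
split=> //; apply: (eq_of_diff 4%N) => //.
have -> : 4%:R * a' * (c - c') = h 1 + h (-1) - 2 * h 0 by rewrite /h b_eq; ring.
by rewrite !h0; ring.
Qed.

(* Generic form of [fdet]; the two are convertible on [int]. *)
Definition disc (Q : 'M[R]_2) := Q 0 1 ^+ 2 - Q 0 0 * Q 1 1.
Definition qval (Q : 'M[R]_2) (u v : R) := qform (Q 0 0) (Q 0 1) (Q 1 1) u v.
(* [bilin4 (B i) u1 u2 v1 v2] is entry [i] of [B (u ⊗ v)]. *)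
Definition bilin4 (x : 'I_4 -> R) (u1 u2 v1 v2 : R) :=
  u1 * v1 * x c0 + u1 * v2 * x c1 + u2 * v1 * x c2 + u2 * v2 * x c3.
Definition composes_coord (Q1 Q2 Q3 : 'M[R]_2) (B : 'M[R]_(2, 4)) :=
  forall u1 u2 v1 v2, qval Q1 u1 u2 * qval Q2 v1 v2 =
    qval Q3 (bilin4 (B 0) u1 u2 v1 v2) (bilin4 (B 1) u1 u2 v1 v2).

Lemma composition_minors (D : R) (Q1 Q2 Q3 : 'M[R]_2) (B : 'M[R]_(2, 4)) :
  D != 0 -> disc Q1 = D -> disc Q2 = D -> disc Q3 = D -> composes_coord Q1 Q2 Q3 B ->
  0 < Q1 0 0 * minor2 B c0 c1 -> 0 < Q2 0 0 * minor2 B c0 c2 ->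
  [/\ minor2 B c0 c1 = Q1 0 0, minor2 B c0 c2 = Q2 0 0 & minor2 B c0 c3 = Q1 0 1 + Q2 0 1] /\
  [/\ minor2 B c1 c2 = Q2 0 1 - Q1 0 1, minor2 B c1 c3 = Q2 1 1 & minor2 B c2 c3 = Q1 1 1].
Proof.
move=> D_neq0 dQ1 dQ2 dQ3 HB o1 o2.
have slice1 u1 u2 : (Q1 0 0 * u1 ^+ 2 + 2 * Q1 0 1 * u1 * u2 + Q1 1 1 * u2 ^+ 2) ^+ 2 =
    (minor2 B c0 c1 * u1 ^+ 2 + (minor2 B c0 c3 - minor2 B c1 c2) * u1 * u2
     + minor2 B c2 c3 * u2 ^+ 2) ^+ 2.
  rewrite -[LHS]/(qval Q1 u1 u2 ^+ 2) -(@sqr_det_transform D _ _ _ _ _ _ _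
    (u1 * B 0 c0 + u2 * B 0 c2) (u1 * B 0 c1 + u2 * B 0 c3)
    (u1 * B 1 c0 + u2 * B 1 c2) (u1 * B 1 c1 + u2 * B 1 c3) D_neq0 dQ2 dQ3).
    by congr (_ ^+ 2); rewrite /minor2; ring.
  by move=> v1 v2; rewrite HB /bilin4; congr qform; ring.
have slice2 v1 v2 : (Q2 0 0 * v1 ^+ 2 + 2 * Q2 0 1 * v1 * v2 + Q2 1 1 * v2 ^+ 2) ^+ 2 =
    (minor2 B c0 c2 * v1 ^+ 2 + (minor2 B c0 c3 + minor2 B c1 c2) * v1 * v2
     + minor2 B c1 c3 * v2 ^+ 2) ^+ 2.
  rewrite -[LHS]/(qval Q2 v1 v2 ^+ 2) -(@sqr_det_transform D _ _ _ _ _ _ _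
    (v1 * B 0 c0 + v2 * B 0 c1) (v1 * B 0 c2 + v2 * B 0 c3)
    (v1 * B 1 c0 + v2 * B 1 c1) (v1 * B 1 c2 + v2 * B 1 c3) D_neq0 dQ1 dQ3).
    by congr (_ ^+ 2); rewrite /minor2; ring.
  by move=> u1 u2; rewrite mulrC HB /bilin4; congr qform; ring.
have [m01 b1 m23] := eq_quadratic_of_sqr slice1 o1.
have [m02 b2 m13] := eq_quadratic_of_sqr slice2 o2.
by split; split=> //; lra.
Qed.

Lemma eq_composition_minors (D : R) (Q1 Q2 Q3 Q3' : 'M[R]_2) (B B' : 'M[R]_(2, 4)) :
  D != 0 -> disc Q1 = D -> disc Q2 = D -> disc Q3 = D -> disc Q3' = D ->
  composes_coord Q1 Q2 Q3 B -> composes_coord Q1 Q2 Q3' B' ->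
  0 < Q1 0 0 * minor2 B c0 c1 -> 0 < Q2 0 0 * minor2 B c0 c2 ->
  0 < Q1 0 0 * minor2 B' c0 c1 -> 0 < Q2 0 0 * minor2 B' c0 c2 ->
  forall i j, minor2 B i j = minor2 B' i j.
Proof.
move=> D_neq0 dQ1 dQ2 dQ3 dQ3' HB HB' o1 o2 o1' o2'.
have [[m01 m02 m03] [m12 m13 m23]] := composition_minors D_neq0 dQ1 dQ2 dQ3 HB o1 o2.
have [[m01' m02' m03'] [m12' m13' m23']] := composition_minors D_neq0 dQ1 dQ2 dQ3' HB' o1' o2'.
apply: eq_minor2_4;
  by rewrite ?(m01, m02, m03, m12, m13, m23, m01', m02', m03', m12', m13', m23').
Qed.

Lemma composes_coord_uniq (Q1 Q2 Q Q' : 'M[R]_2) (B : 'M[R]_(2, 4)) :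
  Q^T = Q -> Q'^T = Q' -> composes_coord Q1 Q2 Q B -> composes_coord Q1 Q2 Q' B ->
  minor2 B c0 c1 != 0 -> Q = Q'.
Proof.
move=> sQ sQ' HQ HQ' m01_neq0.
have eqQ u1 u2 v1 v2 : qval Q (bilin4 (B 0) u1 u2 v1 v2) (bilin4 (B 1) u1 u2 v1 v2) =
    qval Q' (bilin4 (B 0) u1 u2 v1 v2) (bilin4 (B 1) u1 u2 v1 v2) by rewrite -HQ -HQ'.
have e0 := eqQ 1 0 1 0; have e1 := eqQ 1 0 0 1; have e01 := eqQ 1 0 1 1.
rewrite /bilin4 !(mul1r, mul0r, add0r, addr0) in e0 e1 e01.
have [Q00 Q01 Q11] := qform_eq_of_values m01_neq0 e0 e1 e01.
have sym (M : 'M[R]_2) : M^T = M -> M 1 0 = M 0 1 by move=> sM; rewrite -[in LHS]sM mxE.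
apply/matrixP => i j; case: (ord2P i) => ->; case: (ord2P j) => -> //.
by rewrite (sym Q) // (sym Q').
Qed.

End BinaryForms.

Lemma left_multiple_gcdz n (B C : 'M[int]_(2, n)) a b :
  left_multiple B (a *: C) -> left_multiple B (b *: C) -> left_multiple B (gcdz a b *: C).
Proof.
case: (Bezoutz a b) => u [v <-] hA hB.
by rewrite scalerDl -!scalerA; apply: left_multipleD; apply: left_multipleZ.
Qed.

Lemma unimodular_left_multiple (B B' : 'M[int]_(2, 4)) :
  unimodular24 B -> (forall i j, minor2 B i j = minor2 B' i j) -> left_multiple B B'.
Proof.
move=> uB eqB; rewrite -[B']scale1r -uB.
by do !apply: left_multiple_gcdz; exact: minor_left_multiple.
Qed.

Definition cv2 (u v : int) : 'cV[int]_2 := \col_(i < 2) if (i : nat) == 0%N then u else v.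

Lemma cv2_eta (x : 'cV[int]_2) : x = cv2 (x 0 0) (x 1 0).
Proof.
apply/matrixP => i j; rewrite mxE [j]ord1.
by case: (ord2P i) => ->.
Qed.

Lemma mx22_eta (M : 'M[int]_2) : M = mx22 (M 0 0) (M 0 1) (M 1 0) (M 1 1).
Proof. by apply/matrixP => i j; rewrite mxE; case: (ord2P i) => ->; case: (ord2P j) => ->. Qed.

Lemma tr_formmx a b c : (formmx a b c)^T = formmx a b c.
Proof. by apply/matrixP => i j; rewrite !mxE; case: (ord2P i) => ->; case: (ord2P j) => ->. Qed.

Lemma form_cv2 (Q : 'M[int]_2) u v :
  Q^T = Q -> ((cv2 u v)^T *m Q *m cv2 u v) 0 0 = qval Q u v.
Proof.
move=> sQ; have Q10 : Q 1 0 = Q 0 1 by rewrite -[in LHS]sQ mxE.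
by rewrite !mxE !sum_ord2 !mxE !sum_ord2 !mxE /= Q10 /qval /qform; ring.
Qed.

Lemma kron_tensmx m1 n1 m2 n2 (A : 'M[int]_(m1.+1, n1.+1)) (B : 'M[int]_(m2.+1, n2.+1)) :
  kron A B = A *t B.
Proof.
apply/matrixP => i j; rewrite !mxE.
by congr (A _ _ * B _ _); apply: val_inj; rewrite /= inordK // ?mxtens_index_proof1 ?ltn_pmod.
Qed.

Lemma mul_kron_cv2 (B : 'M[int]_(2, 4)) u1 u2 v1 v2 :
  B *m kron (cv2 u1 u2) (cv2 v1 v2) =
  cv2 (bilin4 (B 0) u1 u2 v1 v2) (bilin4 (B 1) u1 u2 v1 v2).
Proof.
apply/matrixP => i j; rewrite [j]ord1 !mxE sum_ord4 !mxE /c0 /c1 /c2 /c3 !inordK //=.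
by case: (ord2P i) => ->; rewrite /bilin4 /c0 /c1 /c2 /c3; ring.
Qed.

Definition composes (Q1 Q2 Q3 : 'M[int]_2) (B : 'M[int]_(2, 4)) : Prop :=
  forall x y : 'cV[int]_2, (x^T *m Q1 *m x) 0 0 * (y^T *m Q2 *m y) 0 0 =
    ((kron x y)^T *m B^T *m Q3 *m B *m kron x y) 0 0.

Lemma composesP (Q1 Q2 Q3 : 'M[int]_2) (B : 'M[int]_(2, 4)) :
  Q1^T = Q1 -> Q2^T = Q2 -> Q3^T = Q3 ->
  composes Q1 Q2 Q3 B <-> composes_coord Q1 Q2 Q3 B.
Proof.
move=> sQ1 sQ2 sQ3.
have E u1 u2 v1 v2 : ((kron (cv2 u1 u2) (cv2 v1 v2))^T *m B^T *m Q3 *m B *m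
    kron (cv2 u1 u2) (cv2 v1 v2)) 0 0 =
    qval Q3 (bilin4 (B 0) u1 u2 v1 v2) (bilin4 (B 1) u1 u2 v1 v2).
  by rewrite -trmx_mul -mulmxA mul_kron_cv2 form_cv2.
split=> H.
  by move=> u1 u2 v1 v2; rewrite -E -!form_cv2 //; exact: H.
by move=> x y; rewrite [x]cv2_eta [y]cv2_eta !form_cv2 // E; exact: H.
Qed.

Lemma composes_conj (Q1 Q2 Q3 S1 S2 : 'M[int]_2) (B : 'M[int]_(2, 4)) :
  composes Q1 Q2 Q3 B ->
  composes (S1^T *m Q1 *m S1) (S2^T *m Q2 *m S2) Q3 (B *m kron S1 S2).
Proof.
move=> H x y; have := H (S1 *m x) (S2 *m y).
by rewrite !kron_tensmx -tensmx_mul !trmx_mul !mulmxA.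
Qed.

Lemma composes_mull (Q1 Q2 Q3 S : 'M[int]_2) (B : 'M[int]_(2, 4)) :
  composes Q1 Q2 Q3 (S *m B) -> composes Q1 Q2 (S^T *m Q3 *m S) B.
Proof. by move=> H x y; rewrite H !trmx_mul !mulmxA. Qed.

Lemma ItildeE D : Itilde D = formmx 1 (lam D) (lam D ^+ 2 - D).
Proof.
apply/matrixP => i j; rewrite /Itilde /Iform !mxE !sum_ord2 !mxE !sum_ord2 !mxE /=.
by case: (ord2P i) => ->; case: (ord2P j) => -> /=; ring.
Qed.

Lemma B0_composes D : composes_coord (Itilde D) (Itilde D) (Itilde D) (B0 D).
Proof.
move=> u1 u2 v1 v2; rewrite ItildeE /qval /bilin4 /B0 !mxE /c0 /c1 /c2 /c3 !inordK //=.
by rewrite /qform; ring.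
Qed.

Lemma tr_Itilde D : (Itilde D)^T = Itilde D.
Proof. by rewrite ItildeE tr_formmx. Qed.

Lemma disc_Itilde D : disc (Itilde D) = D.
Proof. by rewrite ItildeE /disc !mxE /=; ring. Qed.

Lemma B0_kron_composes D (S1 S2 : 'M[int]_2) :
  composes_coord (S1^T *m Itilde D *m S1) (S2^T *m Itilde D *m S2) (Itilde D)
    (B0 D *m kron S1 S2).
Proof.
have sI := tr_Itilde D.
have sC (S : 'M[int]_2) : (S^T *m Itilde D *m S)^T = S^T *m Itilde D *m S.
  exact: tr_conjmx.
apply/(composesP _ (sC S1) (sC S2) sI)/composes_conj/(composesP _ sI sI sI).
exact: B0_composes.
Qed.

Lemma B0_kron_oriented D (S1 S2 : 'M[int]_2) :
  \det S1 = 1 -> \det S2 = 1 ->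
  (S1^T *m Itilde D *m S1) 0 0 != 0 -> (S2^T *m Itilde D *m S2) 0 0 != 0 ->
  0 < (S1^T *m Itilde D *m S1) 0 0 * minor2 (B0 D *m kron S1 S2) c0 c1 /\
  0 < (S2^T *m Itilde D *m S2) 0 0 * minor2 (B0 D *m kron S1 S2) c0 c2.
Proof.
move=> detS1 detS2 a1_neq0 a2_neq0.
have [-> ->] :
    minor2 (B0 D *m kron S1 S2) c0 c1 = (S1^T *m Itilde D *m S1) 0 0 * \det S2 /\
    minor2 (B0 D *m kron S1 S2) c0 c2 = (S2^T *m Itilde D *m S2) 0 0 * \det S1.
  rewrite [S1]mx22_eta [S2]mx22_eta ItildeE !det_mx2 /minor2 /B0 !mxE !sum_ord4 !mxE.
  by rewrite /c0 /c1 /c2 /c3 !inordK //= !sum_ord2 !mxE !sum_ord2 !mxE /=; split; ring.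
by rewrite detS1 detS2 !mulr1 -!expr2 !exprn_even_gt0.
Qed.

Theorem lemma6p2 (D : int) (Q1 Q2 Q3 S1 S2 : 'M[int]_2) (B : 'M[int]_(2, 4)) :
  0 < D -> (forall r : int, r ^+ 2 != D) ->
  pp_form D Q1 -> pp_form D Q2 -> pp_form D Q3 ->
  equiv_via (Itilde D) Q1 S1 -> equiv_via (Itilde D) Q2 S2 ->
  composed Q1 Q2 Q3 B ->
  exists S3 : 'M[int]_2,
    equiv_via (Itilde D) Q3 S3 /\ S3 *m B = B0 D *m kron S1 S2.
Proof.
move=> D_gt0 _ [sQ1 [dQ1 _]] [sQ2 [dQ2 _]] [sQ3 [dQ3 _]] [detS1 eQ1] [detS2 eQ2].
move=> [cB uB o1 o2].
have D_neq0 : D != 0 by rewrite gt_eqF.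
have {}cB : composes_coord Q1 Q2 Q3 B by apply/composesP.
set B' := B0 D *m kron S1 S2.
have cB' : composes_coord Q1 Q2 (Itilde D) B'.
  by rewrite -eQ1 -eQ2; exact: B0_kron_composes.
have a1_neq0 : Q1 0 0 != 0 by apply: contraTneq o1 => ->; rewrite mul0r ltxx.
have a2_neq0 : Q2 0 0 != 0 by apply: contraTneq o2 => ->; rewrite mul0r ltxx.
have m01_neq0 : minor2 B c0 c1 != 0.
  by apply: contraTneq (o1 : 0 < Q1 0 0 * minor2 B c0 c1) => ->; rewrite mulr0 ltxx.
have [o1' o2'] : 0 < Q1 0 0 * minor2 B' c0 c1 /\ 0 < Q2 0 0 * minor2 B' c0 c2.
  by rewrite -eQ1 -eQ2; apply: B0_kron_oriented; rewrite ?eQ1 ?eQ2.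
have eqB :=
  eq_composition_minors D_neq0 dQ1 dQ2 dQ3 (disc_Itilde D) cB cB' o1 o2 o1' o2'.
have [S3 eS3] := unimodular_left_multiple uB eqB.
exists S3; split=> //; split.
  by apply: (mulIf m01_neq0); rewrite mul1r -minor2_mulmx eS3 eqB.
have sI := tr_Itilde D; have sS3 := tr_conjmx S3 sI.
apply: (composes_coord_uniq sS3 sQ3 _ cB m01_neq0).
apply/(composesP _ sQ1 sQ2 sS3)/composes_mull.
by rewrite eS3; apply/(composesP _ sQ1 sQ2 sI).
Qed.
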